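(* Let $(X,u)$ and $(Y,v)$ be Čech closure spaces, let $Y^X$ be the set of all continuous maps $(X,u)\to(Y,v)$, and let $\sigma$ be a Čech closure operator on $Y^X$. Then: (1) $\sigma$ is proper if and only if for every topological space $Z$ having at most one non-isolated point and every continuous $g:Z\times(X,u)\to(Y,v)$, the map $g^*:Z\to(Y^X,\sigma)$ is continuous; (2) $\sigma$ is admissible if and only if for every topological space $Z$ having at most one non-isolated point and every $g:Z\times X\to Y$ with $g^*(Z)\subset Y^X$ such that $g^*:Z\to(Y^X,\sigma)$ is continuous, the map $g:Z\times(X,u)\to(Y,v)$ is continuous.
   Context: A Čech closure space $(X,u)$ is a set $X$ with an operator $u:\mathcal P(X)\to\mathcal P(X)$ satisfying $u(\emptyset)=\emptyset$, $A\subset u(A)$, and $u(A\cup B)=u(A)\cup u(B)$. The interior is $\mathrm{int}_u A=X\setminus u(X\setminus A)$; $U$ is a neighbourhood of $x$ if $x\in\mathrm{int}_uU$. Topological spaces are regarded as closure spaces via their Kuratowski closure. A map $f:(X,u)\to(Y,v)$ is continuous if $f(u(A))\subset v(f(A))$ for all $A$. The product $(Z,w)\times(X,u)$ is $Z\times X$ with the closure operator for which the sets $W\times U$ ($W$ a neighbourhood of $z$, $U$ of $x$) form a neighbourhood base at $(z,x)$. For $g:Z\times X\to Y$, $g^*(z)(x)=g(z,x)$. A closure operator $\sigma$ on $Y^X$ is proper if for every closure space $(Z,w)$, continuity of $g:(Z,w)\times(X,u)\to(Y,v)$ implies continuity of $g^*:(Z,w)\to(Y^X,\sigma)$; it is admissible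 if for every closure space $(Z,w)$ and every $g:Z\times X\to Y$ with $g^*(Z)\subset Y^X$, continuity of $g^*:(Z,w)\to(Y^X,\sigma)$ implies continuity of $g$. *)

(* sets are [set T] = T -> Prop; topological spaces
   are mathcomp-analysis [topologicalType]s, viewed as closure spaces via
   their Kuratowski closure [closure]. *)
From mathcomp Require Import all_boot.
From mathcomp Require Import all_classical topology.
Set Implicit Arguments.
Unset Strict Implicit.
Unset Printing Implicit Defensive.
Local Open Scope classical_set_scope.

Record is_cech (X : Type) (u : set X -> set X) : Prop := {
  cech_set0 : u set0 = set0;
  cech_ext : forall A : set X, A `<=` u A;
  cech_setU : forall A B : set X, u (A `|` B) = u A `|` u B }.

Definition cint (X : Type) (u : set X -> set X) (A : set X) : set X :=
  ~` u (~` A).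
Definition cnbhs (X : Type) (u : set X -> set X) (x : X) (U : set X) : Prop :=
  cint u U x.

Definition ccont (X Y : Type) (u : set X -> set X) (v : set Y -> set Y)
  (f : X -> Y) : Prop :=
  forall A : set X, f @` (u A) `<=` v (f @` A).

(* product closure: the W x U (W nbhd of z, U nbhd of x) form a
   neighbourhood base at (z,x) *)
Definition cprod (Z X : Type) (w : set Z -> set Z) (u : set X -> set X)
  (A : set (Z * X)) : set (Z * X) :=
  fun p => forall (W : set Z) (U : set X), cnbhs w p.1 W -> cnbhs u p.2 U ->
    exists q, A q /\ W q.1 /\ U q.2.

Definition cfun (X Y : Type) (u : set X -> set X) (v : set Y -> set Y) :=
  {f : X -> Y | ccont u v f}.

(* g^* : Z -> Y^X, given as any h with val (h z) = g (z, .) ; such an h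
   exists iff g^*(Z) is contained in Y^X, and is then unique *)
Definition is_gstar (Z X Y : Type) (u : set X -> set X) (v : set Y -> set Y)
  (g : Z * X -> Y) (h : Z -> cfun u v) : Prop :=
  forall z, sval (h z) = fun x => g (z, x).

Definition proper_cl (X Y : Type) (u : set X -> set X) (v : set Y -> set Y)
  (sigma : set (cfun u v) -> set (cfun u v)) : Prop :=
  forall (Z : Type) (w : set Z -> set Z), is_cech w ->
  forall g : Z * X -> Y, ccont (cprod w u) v g ->
  exists h : Z -> cfun u v, is_gstar g h /\ ccont w sigma h.

Definition admissible_cl (X Y : Type) (u : set X -> set X) (v : set Y -> set Y)
  (sigma : set (cfun u v) -> set (cfun u v)) : Prop :=
  forall (Z : Type) (w : set Z -> set Z), is_cech w ->
  forall (g : Z * X -> Y) (h : Z -> cfun u v), is_gstar g h ->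
  ccont w sigma h -> ccont (cprod w u) v g.

Definition at_most_one_nonisolated (Z : topologicalType) : Prop :=
  forall a b : Z, ~ open [set a] -> ~ open [set b] -> a = b.

Definition proper_top1 (X Y : Type) (u : set X -> set X) (v : set Y -> set Y)
  (sigma : set (cfun u v) -> set (cfun u v)) : Prop :=
  forall Z : topologicalType, at_most_one_nonisolated Z ->
  forall g : Z * X -> Y, ccont (cprod (@closure Z) u) v g ->
  exists h : Z -> cfun u v, is_gstar g h /\ ccont (@closure Z) sigma h.

Definition admissible_top1 (X Y : Type) (u : set X -> set X) (v : set Y -> set Y)
  (sigma : set (cfun u v) -> set (cfun u v)) : Prop :=
  forall Z : topologicalType, at_most_one_nonisolated Z ->
  forall (g : Z * X -> Y) (h : Z -> cfun u v), is_gstar g h ->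
  ccont (@closure Z) sigma h -> ccont (cprod (@closure Z) u) v g.

(* For a closure space (Z,w) and z in Z, let Z_z be the topological space on
   Z in which every point other than z is isolated and the neighbourhoods of z
   are its w-neighbourhoods.  Z_z has at most one non-isolated point, and its
   closure is contained in w and agrees with w at z.  So continuity of g on
   (Z,w) x X passes to Z_z x X, while continuity at (z,x) on Z_z x X gives
   continuity at (z,x) on (Z,w) x X; likewise for g^* at z.  Testing at each
   point z against Z_z reduces arbitrary closure spaces to the spaces Z_z. *)
From HB Require Import structures.
From mathcomp Require Import all_boot.
From mathcomp Require Import all_classical topology.
Set Implicit Arguments.
Unset Strict Implicit.
Unset Printing Implicit Defensive.
Local Open Scope classical_set_scope.

Section CechClosure.
Variables (X : Type) (u : set X -> set X) (hu : is_cech u).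

Lemma cech_mono (A B : set X) : A `<=` B -> u A `<=` u B.
Proof. by move=> /setUidPr <- x uAx; rewrite (cech_setU hu); left. Qed.

Lemma cint_sub (A : set X) : cint u A `<=` A.
Proof. by move=> x uCAx; apply: contrapT => nAx; apply/uCAx/(cech_ext hu). Qed.

Lemma cint_setT x : cint u setT x.
Proof. by rewrite /cint setCT (cech_set0 hu). Qed.

Lemma cint_setI (A B : set X) x :
  cint u A x -> cint u B x -> cint u (A `&` B) x.
Proof. by move=> HA HB; rewrite /cint setCI (cech_setU hu) => -[]. Qed.

Lemma cint_mono (A B : set X) : A `<=` B -> cint u A `<=` cint u B.
Proof. by move=> AB x HA uCBx; apply/HA/(cech_mono (subsetC AB)). Qed.

Lemma cech_meets_cnbhs (A W : set X) x :
  u A x -> cnbhs u x W -> A `&` W !=set0.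
Proof.
move=> uAx HW; apply: contrapT => AW0; apply/HW/(cech_mono _ uAx) => a Aa Wa.
by apply: AW0; exists a.
Qed.

End CechClosure.

Lemma cech_closure (T : topologicalType) : is_cech (@closure T).
Proof.
by split; [exact: closure0 | exact: subset_closure | exact: closureU].
Qed.

Lemma ccont_subl (Z Y : Type) (w w' : set Z -> set Z) (v : set Y -> set Y)
    (f : Z -> Y) :
  (forall A, w' A `<=` w A) -> ccont w v f -> ccont w' v f.
Proof.
by move=> le fC A _ [z w'Az <-]; apply: fC; exists z => //; apply: le.
Qed.

Lemma cprod_subl (Z X : Type) (w w' : set Z -> set Z) (u : set X -> set X)
    (B : set (Z * X)) (p : Z * X) :
  (forall A, w' A p.1 -> w A p.1) -> cprod w' u B p -> cprod w u B p.
Proof. by move=> le Bp W U HW HU; apply: Bp HU => w'W; apply/HW/le. Qed.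

Lemma ccont_section (Z X Y : Type) (w : set Z -> set Z) (u : set X -> set X)
    (v : set Y -> set Y) (g : Z * X -> Y) (z : Z) :
  is_cech w -> is_cech u -> is_cech v ->
  ccont (cprod w u) v g -> ccont u v (fun x => g (z, x)).
Proof.
move=> hw hu hv gC A _ [x uAx <-].
have zAx : cprod w u ((fun x => (z, x)) @` A) (z, x).
  move=> W U HW HU; have [a [Aa Ua]] := cech_meets_cnbhs hu uAx HU.
  by exists (z, a); split; [exists a | split => //; apply: (cint_sub hw)].
apply: (cech_mono hv _ (gC _ _ (ex_intro2 _ _ _ zAx erefl))).
by move=> _ [_ [a Aa <-] <-]; exists a.
Qed.

Lemma gstar_unique (Z X Y : Type) (u : set X -> set X) (v : set Y -> set Y)
    (g : Z * X -> Y) (h h' : Z -> cfun u v) :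
  is_gstar g h -> is_gstar g h' -> h = h'.
Proof.
move=> gh gh'; apply: funext => z; move: (gh z) (gh' z).
case: (h z) (h' z) => [f fC] [f' f'C] /= ff' f'f.
by apply: eq_exist; rewrite ff'.
Qed.

(* [top_at hw z] is the space Z_z; the proof [hw] is a parameter only so that
   the topology can be attached to the type. *)
Definition top_at (Z : Type) (w : set Z -> set Z) (hw : is_cech w) (z : Z)
  : Type := Z.

Section TopAt.
Variables (Z : Type) (w : set Z -> set Z) (hw : is_cech w) (z : Z).

HB.instance Definition _ := gen_eqMixin (top_at hw z).
HB.instance Definition _ := gen_choiceMixin (top_at hw z).

Definition top_at_nbhs (p : top_at hw z) (N : set (top_at hw z)) : Prop :=
  N p /\ (p = z -> cnbhs w z N).

HB.instance Definition _ := hasNbhs.Build (top_at hw z) top_at_nbhs.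

Lemma top_at_filter (p : top_at hw z) : ProperFilter (top_at_nbhs p).
Proof.
split; first by case.
split.
- by split => // _; apply: (cint_setT hw).
- move=> A B [Ap HA] [Bp HB]; split; first by split.
  by move=> pz; apply: (cint_setI hw); [exact: HA | exact: HB].
- move=> A B AB [Ap HA].
  by split => [|/HA]; [apply: AB | apply: (cint_mono hw)].
Qed.

Lemma top_at_nbhs_singleton (p : top_at hw z) (A : set (top_at hw z)) :
  top_at_nbhs p A -> A p.
Proof. by case. Qed.

Lemma top_at_nbhs_nbhs (p : top_at hw z) (A : set (top_at hw z)) :
  top_at_nbhs p A -> top_at_nbhs p (top_at_nbhs^~ A).
Proof.
move=> [Ap HA]; split; first by split.
move=> pz; apply: (cint_mono hw) (HA pz) => q Aq; split => // qz.
by apply: HA; rewrite -pz.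
Qed.

HB.instance Definition _ := Nbhs_isNbhsTopological.Build (top_at hw z)
  top_at_filter top_at_nbhs_singleton top_at_nbhs_nbhs.

Lemma top_at_closure_sub (A : set Z) : @closure (top_at hw z) A `<=` w A.
Proof.
move=> p clAp; apply: contrapT => nwAp.
have CA : top_at_nbhs p (~` A).
  split=> [Ap | pz]; first by apply/nwAp/(cech_ext hw).
  by rewrite /cnbhs /cint setCK -pz.
by have [q [Aq nAq]] := clAp _ CA.
Qed.

Lemma top_at_closure_at (A : set Z) : w A z -> @closure (top_at hw z) A z.
Proof. by move=> wAz B [_ /(_ erefl)]; apply: cech_meets_cnbhs. Qed.

Lemma top_at_one_nonisolated : at_most_one_nonisolated (top_at hw z).
Proof.
have isolated (p : top_at hw z) : ~ open [set p] -> p = z.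
  move=> np; apply: contrapT => pz; apply: np.
  by rewrite openE => _ ->; split => // /pz.
by move=> a b /isolated -> /isolated ->.
Qed.

End TopAt.

Arguments top_at_closure_sub {Z w} hw z A.
Arguments top_at_closure_at {Z w} hw z A.
Arguments top_at_one_nonisolated {Z w} hw z.

Section OneNonisolatedSuffices.
Variables (X Y : Type) (u : set X -> set X) (v : set Y -> set Y).
Hypotheses (hu : is_cech u) (hv : is_cech v).
Variable sigma : set (cfun u v) -> set (cfun u v).

Lemma proper_of_top1 : proper_top1 sigma -> proper_cl sigma.
Proof.
move=> P Z w hw g gC.
pose h z : cfun u v :=
  exist _ (fun x => g (z, x)) (ccont_section (z := z) hw hu hv gC).
have gh : is_gstar g h by [].
exists h; split=> // A _ [z wAz <-].
have gCz : ccont (cprod (@closure (top_at hw z)) u) v g.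
  apply: (ccont_subl _ gC) => B p; apply: cprod_subl => C.
  exact: top_at_closure_sub hw z C p.1.
have [h' [gh' h'C]] := P _ (top_at_one_nonisolated hw z) g gCz.
rewrite -(gstar_unique gh' gh).
by apply: h'C; exists z => //; exact: top_at_closure_at hw z A wAz.
Qed.

Lemma admissible_of_top1 : admissible_top1 sigma -> admissible_cl sigma.
Proof.
move=> A Z w hw g h gh hC B _ [[z x] wuBzx <-].
have hCz : ccont (@closure (top_at hw z)) sigma h.
  exact: ccont_subl (top_at_closure_sub hw z) hC.
apply: (A _ (top_at_one_nonisolated hw z) g h gh hCz).
exists (z, x) => //.
by apply: cprod_subl wuBzx => C; apply: top_at_closure_at hw z C.
Qed.

End OneNonisolatedSuffices.

Theorem corollary3 (X Y : Type) (u : set X -> set X) (v : set Y -> set Y)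
  (hu : is_cech u) (hv : is_cech v)
  (sigma : set (cfun u v) -> set (cfun u v)) (hs : is_cech sigma) :
  (proper_cl sigma <-> proper_top1 sigma) /\
  (admissible_cl sigma <-> admissible_top1 sigma).
Proof.
split; split.
- by move=> P T _; apply: P (cech_closure T).
- exact: proper_of_top1.
- by move=> A T _; apply: A (cech_closure T).
- exact: admissible_of_top1.
Qed.
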